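(* Let $m \geq 2$ and $1 \leq k \leq m-1$ be integers. For indeterminates $x, s$, write $$1 - xz + s z^m = \prod_{j=1}^{m} \bigl(1 - u_j z\bigr)$$ with $u_1,\dots,u_m$ in an algebraic closure of $\mathbb{Q}(x,s)$, and define $$c(m,k,x,s,z) = \prod_{1 \leq i_1 < i_2 < \cdots < i_k \leq m} \bigl(z - u_{i_1} u_{i_2} \cdots u_{i_k}\bigr),$$ a polynomial in $z$ of degree $\binom{m}{k}$ with coefficients in $\mathbb{Z}[x,s]$. After the substitution $(x,s) \mapsto (x+1,x)$ we have $$1 - (x+1)z + x z^m = (1-z)\prod_{j=2}^{m}(1 - v_j z),$$ with $v_2,\dots,v_m$ in an algebraic closure of $\mathbb{Q}(x)$. Define $$w_{k-1}(m,x,z) = \prod_{2 \leq i_1 < \cdots < i_{k-1} \leq m} \bigl(z - v_{i_1}\cdots v_{i_{k-1}}\bigr), \qquad w_k(m,x,z) = \prod_{2 \leq i_1 < \cdots < i_{k} \leq m} \bigl(z - v_{i_1}\cdots v_{i_{k}}\bigr),$$ where for $k=1$ the empty product of the $v$'s equals $1$, so that $w_0(m,x,z) = z - 1$. Then $$c(m,k,x+1,x,z) = w_{k-1}(m,x,z)\, w_k(m,x,z),$$ and both $w_{k-1}(m,x,z)$ and $w_k(m,x,z)$ are polynomials with integer coefficients, i.e. they lie in $\mathbb{Z}[x,z]$.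
   Context: The polynomial $c(m,k,x,s,z)$ is the characteristic polynomial of the linear recurrence satisfied (in $n$) by the sequence $p_k(n,m,x,s) = (-1)^{k+1}\sum_{1 \leq i_1 < \cdots < i_k \leq m} (u_{i_1}\cdots u_{i_k})^n$, $n \geq 1$. In the factorization after the substitution $(x,s)\mapsto(x+1,x)$, one root of $1-(x+1)z+xz^m$ (in the sense of the factors $1-u_jz$) equals $1$, since $1-(x+1)z+xz^m=(1-z)\bigl(1 - xz\,\tfrac{1-z^{m-1}}{1-z}\bigr)$; the $v_j$ are the remaining $m-1$ such roots. *)

From HB Require Import structures.
From mathcomp Require Import all_boot all_order all_algebra.
Set Implicit Arguments. Unset Strict Implicit. Unset Printing Implicit Defensive.
Import Order.TTheory GRing.Theory Num.Theory.
Local Open Scope ring_scope.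

Definition rec_poly (L : fieldType) (m : nat) (a b : L) : {poly L} :=
  1 - a *: 'X + b *: 'X^m.

Definition is_rec_roots (L : fieldType) (m : nat) (a b : L) (u : 'I_m -> L) : Prop :=
  rec_poly m a b = \prod_(j < m) (1 - u j *: 'X).

Definition esub_poly (L : fieldType) (n k : nat) (u : 'I_n -> L) : {poly L} :=
  \prod_(S : {set 'I_n} | #|S| == k) ('X - (\prod_(i in S) u i)%:P).

(* Specialisation of W(x,z) in Z[x][z] at a value x of L, giving a polynomial in z. *)
Definition evalZ (L : fieldType) (x : L) (W : {poly {poly int}}) : {poly L} :=
  map_poly (fun p : {poly int} => (map_poly (fun c : int => c%:~R) p).[x]) W.

Arguments rec_poly {L} m a b.
Arguments is_rec_roots {L} m a b u.
Arguments esub_poly {L} n k u.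
Arguments evalZ {L} x W.

(** Both sides of the identity depend on the reciprocal roots only through
    their elementary symmetric functions, and [1 - (x+1) z + x z^m =
    (1 - z) (1 - x (z + ... + z^(m-1)))] shows that the u's have the same
    elementary symmetric functions as (1, v_2, ..., v_m).  Splitting the
    k-subsets of {1, v_2, ..., v_m} according to whether they contain 1 gives
    [c = w_(k-1) w_k].  For integrality, the coefficients of [w_j] are
    symmetric integer polynomials in the v's, hence integer polynomials in
    e_1(v), ..., e_(m-1)(v) by the fundamental theorem, and
    [e_i(v) = (-1)^(i-1) x]. *)

From HB Require Import structures.
From mathcomp Require Import all_boot all_order all_algebra.
From mathcomp Require Import fingroup perm mpoly ring.
Import GRing.Theory.

Set Implicit Arguments.
Unset Strict Implicit.
Unset Printing Implicit Defensive.

Local Open Scope ring_scope.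

(* [esub_poly] over an arbitrary commutative ring, e.g. over [{mpoly int[n]}]. *)
Definition subset_prod_poly {R : comNzRingType} {n} k (a : 'I_n -> R) : {poly R} :=
  \prod_(S : {set 'I_n} | #|S| == k) ('X - (\prod_(i in S) a i)%:P).

Definition esym_val {R : comNzRingType} {n} (a : 'I_n -> R) k : R :=
  \sum_(S : {set 'I_n} | #|S| == k) \prod_(i in S) a i.

Section SubsetProducts.
Variable R : comNzRingType.

Lemma eq_subset_prod_poly n k (a b : 'I_n -> R) :
  a =1 b -> subset_prod_poly k a = subset_prod_poly k b.
Proof.
move=> eq_ab; apply: eq_bigr => S _.
by congr (_ - _%:P); apply: eq_bigr => i _.
Qed.

Lemma subset_prod_poly_perm n k (a : 'I_n -> R) (s : 'S_n) :
  subset_prod_poly k (a \o s) = subset_prod_poly k a.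
Proof.
rewrite [RHS](reindex_inj (imset_inj (@perm_inj _ s))) /=.
apply: eq_big => S; first by rewrite card_imset //; apply: perm_inj.
by move=> _; rewrite big_imset //; move=> i j _ _; apply: perm_inj.
Qed.

Lemma map_subset_prod_poly (T : comNzRingType) (f : {rmorphism R -> T})
    n k (a : 'I_n -> R) :
  map_poly f (subset_prod_poly k a) = subset_prod_poly k (f \o a).
Proof.
rewrite rmorph_prod; apply: eq_bigr => S _.
by rewrite rmorphB /= map_polyX map_polyC /= rmorph_prod.
Qed.

Lemma coef_prod_1subZX n (a : 'I_n -> R) k :
  (\prod_i (1 - a i *: 'X))`_k = (-1) ^+ k * esym_val a k.
Proof.
rewrite (eq_bigr (fun i => (- a i) *: 'X + 1)); last first.
  by move=> i _; rewrite addrC scaleNr.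
rewrite bigA_distr coef_sum /esym_val mulr_sumr.
rewrite (bigID (fun S : {set 'I_n} => #|S| == k)) /= addrC big1 ?add0r.
  apply: eq_bigr => S /eqP cardS.
  rewrite -big_mkcond /= scaler_prod prodr_const prodrN coefZ coefXn.
  by rewrite cardS eqxx mulr1.
move=> S /negbTE cardS.
rewrite -big_mkcond /= scaler_prod prodr_const prodrN coefZ coefXn.
by rewrite eq_sym cardS !mulr0.
Qed.

Lemma prod_1subZX_esym_eq n (a b : 'I_n -> R) :
  \prod_i (1 - a i *: 'X) = \prod_i (1 - b i *: 'X) ->
  forall k, esym_val a k = esym_val b k.
Proof.
move=> eq_ab k.
by rewrite -[LHS](signrMK k) -coef_prod_1subZX eq_ab coef_prod_1subZX signrMK.
Qed.

End SubsetProducts.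

Lemma eq_mmap (R S : comNzRingType) n (f1 f2 : R -> S) (h1 h2 : 'I_n -> S)
    (p : {mpoly R[n]}) :
  f1 =1 f2 -> h1 =1 h2 -> mmap f1 h1 p = mmap f2 h2 p.
Proof.
move=> ef eh; apply: eq_bigr => m _.
by rewrite ef (mmap1_eq _ eh).
Qed.

Lemma rmorph_mmap (R S T : comNzRingType) n (g : {rmorphism S -> T})
    (f : R -> S) (h : 'I_n -> S) (p : {mpoly R[n]}) :
  g (mmap f h p) = mmap (g \o f) (g \o h) p.
Proof.
rewrite rmorph_sum; apply: eq_bigr => m _.
rewrite rmorphM rmorph_prod; congr (_ * _).
by apply: eq_bigr => i _; rewrite rmorphXn.
Qed.

Lemma mmap_comp_mpoly (R S : comNzRingType) n k (f : {rmorphism R -> S})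
    (h : 'I_n -> S) (t : {mpoly R[k]}) (lq : k.-tuple {mpoly R[n]}) :
  mmap f h (t \mPo lq) = mmap f (fun i => mmap f h (tnth lq i)) t.
Proof. by rewrite rmorph_mmap; apply: eq_mmap => // c /=; rewrite mmapC. Qed.

Lemma mmap_mesym (S : comNzRingType) n (v : 'I_n -> S) k :
  mmap intr v (mesym n int k) = esym_val v k.
Proof.
rewrite rmorph_sum; apply: eq_bigr => J _.
by rewrite rmorph_prod; apply: eq_bigr => i _ /=; rewrite mmapX mmap1U.
Qed.

Lemma subset_prod_poly_symmetric n k d :
  (subset_prod_poly k (fun i : 'I_n => 'X_i : {mpoly int[n]}))`_d \is symmetric.
Proof.
apply/issymP => s; rewrite -coef_map.
have -> : map_poly (msym s) (subset_prod_poly k (fun i : 'I_n => 'X_i))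
    = subset_prod_poly k ((fun i : 'I_n => 'X_i : {mpoly int[n]}) \o s).
  rewrite map_subset_prod_poly; apply: eq_subset_prod_poly => i /=.
  by rewrite /msym mmapX mmap1U.
by rewrite subset_prod_poly_perm.
Qed.

Lemma subset_prod_poly_esym n k :
  exists T : {poly {mpoly int[n]}}, forall (R : comNzRingType) (a : 'I_n -> R),
    subset_prod_poly k a = map_poly (mmap intr (fun i : 'I_n => esym_val a i.+1)) T.
Proof.
pose G := subset_prod_poly k (fun i : 'I_n => 'X_i : {mpoly int[n]}).
pose t d := sval (sym_fundamental (subset_prod_poly_symmetric n k d)).
have tP d : t d \mPo [tuple mesym n int i.+1 | i < n] = G`_d.
  by rewrite /t; case: sym_fundamental => ? [].
exists (\poly_(d < size G) t d) => R a.
have -> : subset_prod_poly k a = map_poly (mmap intr a) G.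
  rewrite map_subset_prod_poly; apply: eq_subset_prod_poly => i /=.
  by rewrite mmapX mmap1U.
apply/polyP => d; rewrite !coef_map_id0 ?mmap0 // coef_poly.
case: ltnP => [_|leGd]; last by rewrite (nth_default _ leGd) !mmap0.
rewrite -tP mmap_comp_mpoly; apply: eq_mmap => // i.
by rewrite tnth_map tnth_ord_tuple mmap_mesym.
Qed.

Lemma subset_prod_poly_esym_eq (R : comNzRingType) n k (a b : 'I_n -> R) :
  (forall i : 'I_n, esym_val a i.+1 = esym_val b i.+1) ->
  subset_prod_poly k a = subset_prod_poly k b.
Proof.
move=> esym_ab; have [T esubT] := subset_prod_poly_esym n k.
by rewrite !esubT; apply: eq_map_poly => p; apply: eq_mmap.
Qed.

Lemma esub_poly_integral n k (c : 'I_n -> {poly int}) :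
  exists W : {poly {poly int}}, forall (L : fieldType) (x : L) (v : 'I_n -> L),
    (forall i : 'I_n, esym_val v i.+1 = (map_poly intr (c i)).[x]) ->
    esub_poly n k v = evalZ x W.
Proof.
have [T esubT] := subset_prod_poly_esym n k.
exists (map_poly (mmap polyC c) T) => L x v esym_v.
rewrite -[esub_poly n k v]/(subset_prod_poly k v) esubT.
apply/polyP => d; rewrite coef_map coef_map_id0 ?map_poly0 ?horner0 //.
rewrite coef_map /=.
have -> : (map_poly intr (mmap polyC c T`_d)).[x]
    = (horner_eval x \o map_poly intr) (mmap polyC c T`_d) by [].
rewrite rmorph_mmap; apply: eq_mmap => [z|i] /=; last by rewrite esym_v.
by rewrite /horner_eval map_polyC hornerC.
Qed.

Section LiftSubsets.
Variable n : nat.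

Definition lift0_set (T : {set 'I_n}) : {set 'I_n.+1} := lift ord0 @: T.
Definition unlift0_set (S : {set 'I_n.+1}) : {set 'I_n} := [set j | lift ord0 j \in S].

Lemma lift0_setK : cancel lift0_set unlift0_set.
Proof. by move=> T; apply/setP => j; rewrite inE mem_imset //; apply: lift_inj. Qed.

Lemma ord0_notin_lift0_set T : ord0 \notin lift0_set T.
Proof. by apply/imsetP => -[j _ /eqP]; rewrite (negbTE (neq_lift _ _)). Qed.

Lemma card_lift0_set T : #|lift0_set T| = #|T|.
Proof. by rewrite card_imset //; apply: lift_inj. Qed.

Lemma unlift0_setK S : lift0_set (unlift0_set S) = S :\ ord0.
Proof.
apply/setP => i; rewrite in_setD1; case: (unliftP ord0 i) => [j ->|->].
  by rewrite mem_imset ?inE 1?eq_sym ?(negbTE (neq_lift _ _)) //; apply: lift_inj.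
by rewrite eqxx (negbTE (ord0_notin_lift0_set _)).
Qed.

Variables (R : Type) (idx : R) (op : Monoid.com_law idx).

Lemma big_subsets_notin_ord0 k (F : {set 'I_n.+1} -> R) :
  \big[op/idx]_(S : {set 'I_n.+1} | (#|S| == k) && (ord0 \notin S)) F S
  = \big[op/idx]_(T : {set 'I_n} | #|T| == k) F (lift0_set T).
Proof.
rewrite (reindex_onto lift0_set unlift0_set) /=; last first.
  move=> S /andP[_ S0]; rewrite unlift0_setK; apply/setP => i.
  by rewrite in_setD1; case: eqP => // ->; rewrite (negbTE S0).
apply: eq_bigl => T.
by rewrite lift0_setK eqxx card_lift0_set ord0_notin_lift0_set !andbT.
Qed.

Lemma big_subsets_in_ord0 k (F : {set 'I_n.+1} -> R) :
  \big[op/idx]_(S : {set 'I_n.+1} | (#|S| == k.+1) && (ord0 \in S)) F S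
  = \big[op/idx]_(T : {set 'I_n} | #|T| == k) F (ord0 |: lift0_set T).
Proof.
rewrite (reindex_onto (fun T => ord0 |: lift0_set T) unlift0_set) /=; last first.
  by move=> S /andP[_ S0]; rewrite unlift0_setK setD1K.
apply: eq_bigl => T.
rewrite cardsU1 ord0_notin_lift0_set card_lift0_set setU11 andbT eqSS.
have -> : unlift0_set (ord0 |: lift0_set T) = T.
  apply/setP => j; rewrite !inE eq_sym (negbTE (neq_lift _ _)) /=.
  by rewrite mem_imset //; apply: lift_inj.
by rewrite eqxx andbT.
Qed.

End LiftSubsets.

Arguments lift0_set {n} T.

Definition cons1 {R : comNzRingType} {n} (a : 'I_n -> R) (i : 'I_n.+1) : R :=
  if unlift ord0 i is Some j then a j else 1.

Lemma prod_1subZX_cons1 (R : comNzRingType) n (a : 'I_n -> R) :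
  \prod_i (1 - cons1 a i *: 'X) = (1 - 'X) * \prod_i (1 - a i *: 'X).
Proof.
rewrite big_ord_recl /cons1 unlift_none scale1r; congr (_ * _).
by apply: eq_bigr => i _; rewrite liftK.
Qed.

Lemma subset_prod_poly_cons1 (R : comNzRingType) n k (a : 'I_n -> R) :
  subset_prod_poly k.+1 (cons1 a) = subset_prod_poly k a * subset_prod_poly k.+1 a.
Proof.
have prod_lift T : \prod_(i in lift0_set T) cons1 a i = \prod_(i in T) a i.
  rewrite big_imset /=; last by move=> i j _ _; apply: lift_inj.
  by apply: eq_bigr => i _; rewrite /cons1 liftK.
rewrite /subset_prod_poly (bigID (fun S : {set 'I_n.+1} => ord0 \in S)) /=.
rewrite big_subsets_in_ord0 big_subsets_notin_ord0.
congr (_ * _); apply: eq_bigr => T _; last by rewrite prod_lift.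
by rewrite big_setU1 ?ord0_notin_lift0_set //= /cons1 unlift_none mul1r prod_lift.
Qed.

Lemma esym_val_geometric (R : comNzRingType) n (x : R) (v : 'I_n -> R) :
  \prod_i (1 - v i *: 'X) = 1 - x *: ('X * \sum_(i < n) 'X^i) ->
  forall i : 'I_n, esym_val v i.+1 = (-1) ^+ i * x.
Proof.
move=> prod_v i; rewrite -[LHS](signrMK i.+1) -coef_prod_1subZX prod_v.
rewrite coefB coef1 coefZ coefXM coef_sum /= (bigD1 i) //= coefXn eqxx.
rewrite big1 => [|j /negbTE neq_ji]; last by rewrite coefXn val_eqE eq_sym neq_ji.
by rewrite /= addr0 mulr1 sub0r exprS mulN1r mulNr mulrN opprK.
Qed.

Lemma rec_poly_factor (R : fieldType) n (x : R) :
  rec_poly n.+1 (x + 1) x = (1 - 'X) * (1 - x *: ('X * \sum_(i < n) 'X^i)).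
Proof.
have geom := subrX1 ('X : {poly R}) n.
rewrite /rec_poly -!mul_polyC polyCD polyC1 exprS.
transitivity (1 - 'X + x%:P * 'X * ('X^n - 1)); first by ring.
by rewrite geom; ring.
Qed.

Theorem mainTheorem1 (m k : nat) (hm : (2 <= m)%N) (hk1 : (1 <= k)%N) (hk2 : (k <= m - 1)%N) :
  exists Wkm1 Wk : {poly {poly int}},
  forall (L : closedFieldType), [pchar L] =i pred0 ->
  forall (x : L) (u : 'I_m -> L) (v : 'I_m.-1 -> L),
    is_rec_roots m (x + 1) x u ->
    rec_poly m (x + 1) x = (1 - 'X) * \prod_(j < m.-1) (1 - v j *: 'X) ->
    [/\ esub_poly m k u = esub_poly m.-1 k.-1 v * esub_poly m.-1 k v,
        esub_poly m.-1 k.-1 v = evalZ x Wkm1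
      & esub_poly m.-1 k v = evalZ x Wk].
Proof.
case: m hm hk2 => [|[|n]] // _ _; case: k hk1 => [|k] // _.
pose alt_X (i : 'I_n.+1) : {poly int} := (-1) ^+ i *: 'X.
have [W1 eval_W1] := esub_poly_integral k alt_X.
have [W2 eval_W2] := esub_poly_integral k.+1 alt_X.
exists W1, W2 => L _ x u v rec_u rec_v.
have prod_v : \prod_j (1 - v j *: 'X) = 1 - x *: ('X * \sum_(i < n.+1) 'X^i).
  have nz_1subX : (1 - 'X : {poly L}) != 0.
    by rewrite -oppr_eq0 opprB -polyC1 polyXsubC_eq0.
  by apply: (mulfI nz_1subX); rewrite -rec_v rec_poly_factor.
have esym_v (i : 'I_n.+1) : esym_val v i.+1 = (map_poly intr (alt_X i)).[x].
  rewrite (esym_val_geometric prod_v) map_polyZ map_polyX.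
  by rewrite hornerZ hornerX rmorph_sign.
split; [|exact: eval_W1|exact: eval_W2].
rewrite /esub_poly -subset_prod_poly_cons1; apply: subset_prod_poly_esym_eq => i.
by apply: prod_1subZX_esym_eq; rewrite prod_1subZX_cons1 -rec_u.
Qed.
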